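(* Let $k\ge 2$, $N\ge 2$. Then $$\det(\lambda I-\widetilde H)=\frac{1}{k!}\sum_{j=0}^{k-1}|s(k,k-j)|\prod_{\substack{i=0\\ i\ne j}}^{k-1}\bigl(\lambda-N^{k-i}\bigr),$$ equivalently $$\frac{\det(\lambda I-\widetilde H)}{\det(\lambda I-H)}=\sum_{j=0}^{k-1}\frac{|s(k,k-j)|/k!}{\lambda-N^{k-j}}.$$
   Context: $H[c,c'] = \#\{(d_1,\ldots,d_k)\in\{0,\ldots,N-1\}^k : \lfloor (d_1+\cdots+d_k+c)/N\rfloor = c'\}$ for $c,c'\in\{0,\ldots,k-1\}$ (count matrix of the carry chain of $k$-summand base-$N$ addition); $\widetilde H$ is its leading $(k-1)\times(k-1)$ principal submatrix (indices $0,\ldots,k-2$). $|s(k,m)|$ is the unsigned Stirling number of the first kind, the coefficient of $x^m$ in $x(x+1)\cdots(x+k-1)$. *)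

From HB Require Import structures.
From mathcomp Require Import all_boot all_order all_algebra.
Set Implicit Arguments. Unset Strict Implicit. Unset Printing Implicit Defensive.
Import GRing.Theory Num.Theory.
Local Open Scope ring_scope.

Definition carry_count (k N c c' : nat) : nat :=
  #|[set d : {ffun 'I_k -> 'I_N} |
      ((\sum_(i < k) (nat_of_ord (d i)) + c) %/ N)%N == c']|.

Definition carryH (k N : nat) : 'M[rat]_k :=
  \matrix_(i < k, j < k) (carry_count k N i j)%:R.

Definition carryHt (k N : nat) : 'M[rat]_(k.-1) :=
  \matrix_(i < k.-1, j < k.-1) (carry_count k N i j)%:R.

Definition stirling1u (k m : nat) : rat :=
  (\prod_(i < k) ('X + (i%:R)%:P) : {poly rat})`_m.

From mathcomp Require Import all_boot all_order all_algebra.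
From mathcomp Require Import zify ring.
Set Implicit Arguments. Unset Strict Implicit. Unset Printing Implicit Defensive.
Import Order.TTheory GRing.Theory Num.Theory.
Local Open Scope ring_scope.

(* Let V[c, j] be the coefficient of x^(k-j) in binom(x + c, k).  Counting
   k-digit additions gives \sum_c' H[c, c'] binom(x + c', k) = binom(N x + c, k),
   and x -> N x multiplies the coefficient of x^(k-j) by N^(k-j): the columns of
   V are eigenvectors of H for the distinct eigenvalues N^(k-j).  Hence
   char_poly H = \prod_j (X - N^(k-j)) and adj(X - H) maps column j of V to
   itself times \prod_(i <> j) (X - N^(k-i)).  The rows of V sum to the
   indicator of the last index, so the corner cofactor det(X - Ht) of adj(X - H)
   is the sum over j of these products weighted by the last row
   V[k-1, j] = |s(k, k-j)| / k!. *)

Section DigitSums.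
Local Open Scope nat_scope.
Variable N : nat.
Hypothesis N_gt0 : 0 < N.

Local Notation digits k := {ffun 'I_k -> 'I_N}.
Local Notation dsum d := (\sum_i nat_of_ord (d i)).

Lemma sum_digitsS k (F : nat -> nat) :
  \sum_(d : digits k.+1) F (dsum d) = \sum_(a < N) \sum_(d : digits k) F (a + dsum d).
Proof.
pose cons (a : 'I_N) (d : digits k) : digits k.+1 :=
  [ffun i => if unlift ord0 i is Some j then d j else a].
rewrite pair_bigA /= (reindex (fun p => cons p.1 p.2)) /=.
  apply: eq_bigr => [[a d]] _ /=; congr F.
  rewrite big_ord_recl !ffunE unlift_none; congr addn.
  by apply: eq_bigr => i _; rewrite ffunE liftK.
exists (fun d : digits k.+1 => (d ord0, [ffun j => d (lift ord0 j)])) => [[a d]|d] _ /=.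
  rewrite ffunE unlift_none; congr pair; apply/ffunP => j; by rewrite !ffunE liftK.
apply/ffunP => i; rewrite ffunE; case: unliftP => [j ->|->]; by rewrite ?ffunE.
Qed.

Lemma carry_lt k (d : digits k) c : c < k -> (dsum d + c) %/ N < k.
Proof.
move=> lt_ck; rewrite ltn_divLR //.
have le_sum : dsum d <= k * N.-1.
  rewrite -[k in k * _]card_ord -sum_nat_const; apply: leq_sum => i _.
  by rewrite -ltnS prednK.
have -> : k * N = k * N.-1 + k by rewrite -mulnSr prednK.
lia.
Qed.

(* Exactly one digit [a], namely [N.-1 - m %% N], makes [m + a] carry into the next multiple of [N]. *)
Lemma sum_digit_carry m (g : nat -> nat) :
  \sum_(a < N) (N %| (m + a).+1) * g ((m + a) %/ N) = g (m %/ N).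
Proof.
have lt_rN := ltn_pmod m N_gt0; have def_m := divn_eq m N.
move: lt_rN def_m; set q := m %/ N; set r := m %% N => lt_rN def_m.
have lt_a : N.-1 - r < N by lia.
rewrite (bigD1 (Ordinal lt_a)) //= big1 ?addn0.
  have -> : N %| (m + (N.-1 - r)).+1 by apply/dvdnP; exists q.+1; lia.
  have -> : m + (N.-1 - r) = q * N + N.-1 by lia.
  by rewrite mul1n divnMDl // divn_small ?addn0 //; lia.
move=> a /eqP ne_a; case: (boolP (N %| _)) => [/dvdnP [q' def_q']|//].
case: ne_a; apply: val_inj => /=.
have lt_aN : a < N by [].
have : q' = q + 1 by nia.
nia.
Qed.

Lemma bin_addbS (b : bool) m k : 'C(b + m, k.+1) = 'C(m, k.+1) + b * 'C(m, k).
Proof. by case: b; rewrite ?add1n ?add0n ?binS ?mul1n ?mul0n ?addn0. Qed.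

Lemma sum_bin_carry k n :
  \sum_(d : digits k) 'C((dsum d + n) %/ N, k) = 'C(n, k).
Proof.
elim: k n => [|k IHk] n.
  under eq_bigr do rewrite bin0.
  by rewrite sum_nat_const card_ffun !card_ord expn0 bin0.
elim: n => [|n IHn].
  by rewrite bin0n big1 // => d _; rewrite bin_small // carry_lt.
under eq_bigr do rewrite addnS divnS // bin_addbS.
rewrite big_split /= IHn binS; congr addn.
rewrite -(IHk n) (sum_digitsS _ (fun s => (N %| (s + n).+1) * 'C((s + n) %/ N, k))).
rewrite exchange_big /=; apply: eq_bigr => d _.
rewrite -(sum_digit_carry _ (fun x => 'C(x, k))); apply: eq_bigr => a _.
by rewrite -addnA addnC.
Qed.

Lemma sum_carry_count_bin k c x : c < k ->
  \sum_(c' < k) carry_count k N c c' * 'C(x + c', k) = 'C(N * x + c, k).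
Proof.
move=> lt_ck; rewrite -(sum_bin_carry k (N * x + c)).
transitivity (\sum_(c' < k) \sum_(d : digits k)
   (((dsum d + c) %/ N == c') * 'C(x + c', k))).
  apply: eq_bigr => c' _; rewrite /carry_count -sum1_card big_distrl /=.
  by rewrite big_mkcond /=; apply: eq_bigr => d _; rewrite inE; case: eqP.
rewrite exchange_big /=; apply: eq_bigr => d _.
rewrite addnCA mulnC divnMDl // (bigD1 (Ordinal (carry_lt d lt_ck))) //= eqxx mul1n.
rewrite [X in _ + X]big1 => [|c' ne_c']; first by rewrite addn0.
rewrite (negbTE (contraNneq _ ne_c')) // => def_c'.
by rewrite -val_eqE /= def_c'.
Qed.

End DigitSums.

Lemma coef_comp_scaleX (R : comNzRingType) (p : {poly R}) (a : R) t :
  (p \Po (a *: 'X))`_t = a ^+ t * p`_t.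
Proof.
rewrite coef_comp_poly.
under eq_bigr do rewrite exprZn coefZ coefXn.
case: (ltnP t (size p)) => [lt_tp|le_pt].
  rewrite (bigD1 (Ordinal lt_tp)) //= eqxx mulr1 big1 ?addr0 1?mulrC // => i ne_i.
  by case: eqP => [def_t|]; [case/eqP: ne_i; apply: val_inj | rewrite !mulr0].
rewrite nth_default // mulr0 big1 // => i _.
by case: eqP => [def_t|]; [have := ltn_ord i; rewrite -def_t ltnNge le_pt | rewrite !mulr0].
Qed.

Section BinomialPolynomial.
Variable F : numFieldType.
Implicit Types (p q : {poly F}) (x c : F).

Definition binpoly k q : {poly F} := (k`!%:R)^-1 *: \prod_(i < k) (q - i%:R%:P).

Lemma horner_binpoly k q x m : q.[x] = m%:R -> (binpoly k q).[x] = 'C(m, k)%:R.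
Proof.
move=> qx; rewrite hornerZ horner_prod.
under eq_bigr do rewrite hornerD hornerN hornerC qx.
have -> : \prod_(i < k) (m%:R - i%:R : F) = (m ^_ k)%:R.
  elim: k => [|k IHk]; first by rewrite big_ord0 ffactn0.
  rewrite big_ord_recr /= IHk ffactnSr natrM.
  by case: (leqP k m) => [le_km|lt_mk]; [rewrite natrB | rewrite ffact_small // !mul0r].
by rewrite -bin_ffact natrM mulrC mulfK // pnatr_eq0 -lt0n fact_gt0.
Qed.

Lemma poly_natr_eq0 p : (forall m : nat, p.[m%:R] = 0) -> p = 0.
Proof.
move=> p_nat; apply: (@roots_geq_poly_eq0 _ p [seq i%:R | i <- iota 0 (size p)]).
- by apply/allP => _ /mapP [i _ ->]; rewrite /root p_nat.
- by rewrite map_inj_uniq ?iota_uniq // => i j /eqP; rewrite eqr_nat => /eqP.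
- by rewrite size_map size_iota.
Qed.

Lemma binpoly_comp_scaleX k a c :
  binpoly k (a *: 'X + c%:P) = binpoly k ('X + c%:P) \Po (a *: 'X).
Proof.
rewrite /binpoly comp_polyZ rmorph_prod /=; congr (_ *: _); apply: eq_bigr => i _.
by rewrite comp_polyB comp_polyD comp_polyX !comp_polyC.
Qed.

Lemma size_binpoly_XaddC k c : (size (binpoly k ('X + c%:P)) <= k.+1)%N.
Proof.
rewrite (leq_trans (size_scale_leq _ _)) //.
have -> : \prod_(i < k) ('X + c%:P - i%:R%:P) = \prod_(i < k) ('X - (i%:R - c)%:P).
  by apply: eq_bigr => i _; rewrite polyCB opprB addrA addrAC.
by rewrite size_prod_XsubC [index_enum _]unlock -enumT size_enum_ord.
Qed.

Lemma sum_carry_count_binpoly k N (c : nat) : (0 < N)%N -> (c < k)%N ->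
  \sum_(c' < k) (carry_count k N c c')%:R *: binpoly k ('X + c'%:R%:P) =
  binpoly k (N%:R *: 'X + c%:R%:P).
Proof.
move=> N_gt0 lt_ck; apply/eqP; rewrite -subr_eq0; apply/eqP; apply: poly_natr_eq0 => x.
rewrite hornerD hornerN horner_sum (@horner_binpoly _ _ _ (N * x + c)); last first.
  by rewrite hornerD hornerZ hornerX hornerC natrD natrM.
under eq_bigr => c' _ do
  rewrite hornerZ (@horner_binpoly _ _ _ (x + c')) ?hornerD ?hornerX ?hornerC ?natrD //.
rewrite -(sum_carry_count_bin N_gt0 x lt_ck) natr_sum.
by apply/eqP; rewrite subr_eq0; apply/eqP; apply: eq_bigr => i _; rewrite natrM.
Qed.

Definition binom_coefmx k : 'M[F]_k :=
  \matrix_(c < k, j < k) (binpoly k ('X + (c : nat)%:R%:P))`_(k - j).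

(* Row [c] holds the nonconstant coefficients of [p], so it sums to [p.[1] - p.[0]]. *)
Lemma binom_coefmx_row_sum k (c : 'I_k) :
  \sum_j binom_coefmx k c j = (c.+1 == k)%:R.
Proof.
set p := binpoly k ('X + (c : nat)%:R%:P).
under eq_bigr do rewrite mxE.
rewrite (reindex_inj rev_ord_inj) /=.
have sub_rev (j : 'I_k) : (k - (k - j.+1) = j.+1)%N by have := ltn_ord j; lia.
under eq_bigr do rewrite sub_rev.
have p1 : p.[1] = 'C(c.+1, k)%:R.
  by apply: horner_binpoly; rewrite hornerD hornerX hornerC -add1n natrD.
have p0 : p.[0] = 'C(c, k)%:R.
  by apply: horner_binpoly; rewrite hornerD hornerX hornerC add0r.
rewrite (horner_coef_wide _ (size_binpoly_XaddC k _)) big_ord_recl /= in p1.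
rewrite bin_small // horner_coef0 in p0.
move: p1; rewrite p0 expr0 mulr1 add0r.
under eq_bigr do rewrite expr1n mulr1.
move=> ->; case: (ltngtP c.+1 k) => [lt_ck|lt_kc|eq_ck].
- by rewrite bin_small.
- by have := ltn_ord c; lia.
- by rewrite eq_ck binn.
Qed.

End BinomialPolynomial.

Lemma stirling1u_ge0 k t : 0 <= stirling1u k t.
Proof.
elim: k t => [|k IHk] t; first by rewrite /stirling1u big_ord0 coef1 ler0n.
rewrite /stirling1u big_ord_recr /= mulrDr coefD coefMX coefMC.
by rewrite addr_ge0 ?mulr_ge0 ?ler0n //; case: (t == 0)%N => //; apply: IHk.
Qed.

Lemma stirling1u_gt0 k t : (0 < t <= k)%N -> 0 < stirling1u k t.
Proof.
elim: k t => [|k IHk] [|t] //= le_tk.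
rewrite /stirling1u big_ord_recr /= mulrDr coefD coefMX coefMC /=.
case: t le_tk => [_|t le_tk]; last first.
  by rewrite ltr_wpDr ?mulr_ge0 ?ler0n ?stirling1u_ge0 ?IHk.
case: k IHk => [_|k IHk]; first by rewrite big_ord0 coef1 mulr0 addr0 ltr01.
by rewrite ltr_wpDl ?stirling1u_ge0 // mulr_gt0 ?ltr0n ?IHk.
Qed.

Lemma binom_coefmx_last n (j : 'I_n.+1) :
  binom_coefmx rat n.+1 ord_max j = (n.+1)`!%:R^-1 * stirling1u n.+1 (n.+1 - j).
Proof.
rewrite mxE coefZ /stirling1u; congr (_ * _`_ _); congr polyseq.
rewrite [RHS](reindex_inj rev_ord_inj) /=; apply: eq_bigr => i _.
have lt_in := ltn_ord i.
by rewrite subSS natrB; [rewrite polyCB; ring | lia].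
Qed.

Lemma carryH_binom_coefmx k N : (0 < N)%N ->
  carryH k N *m binom_coefmx rat k =
  binom_coefmx rat k *m diag_mx (\row_(j < k) (N ^ (k - j))%:R).
Proof.
move=> N_gt0; apply/matrixP => c j; rewrite mul_mx_diag !mxE.
under eq_bigr do rewrite !mxE.
have := congr1 (fun p : {poly rat} => p`_(k - j)) (sum_carry_count_binpoly _ N_gt0 (ltn_ord c)).
rewrite /= binpoly_comp_scaleX coef_comp_scaleX coef_sum natrX mulrC => <-.
by under [RHS]eq_bigr do rewrite coefZ.
Qed.

Lemma carryHt_row'_col' n N :
  carryHt n.+1 N = row' ord_max (col' ord_max (carryH n.+1 N)).
Proof. by apply/matrixP => i j; rewrite !mxE !lift_max. Qed.

Lemma char_poly_row'_col' (R : comNzRingType) n (A : 'M[R]_n) i :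
  char_poly (row' i (col' i A)) = \adj (char_poly_mx A) i i.
Proof.
by rewrite mxE /cofactor -signr_odd addnn odd_double mul1r row'_col'_char_poly_mx.
Qed.

Lemma sum_row_mulmx_polyC (R : nzRingType) n (B : 'M[{poly R}]_n) (V : 'M[R]_n) r i :
  (forall c, \sum_j V c j = (c == i)%:R) ->
  \sum_j (B *m map_mx polyC V) r j = B r i.
Proof.
move=> V_sum; have row_sum c :
    \sum_j B r c * map_mx polyC V c j = B r c * ((c == i)%:R)%:P.
  by rewrite -V_sum rmorph_sum big_distrr; apply: eq_bigr => j _; rewrite mxE.
under eq_bigr do rewrite mxE.
rewrite exchange_big /= (eq_bigr _ (fun c _ => row_sum c)) (bigD1 i) //= eqxx mulr1.
by rewrite big1 ?addr0 // => c /negbTE ->; rewrite polyC0 mulr0.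
Qed.

Section EigenvectorBasis.
Variables (F : fieldType) (n : nat) (A V : 'M[F]_n) (a : 'I_n -> F).
Hypothesis AV : A *m V = V *m diag_mx (\row_j a j).

Local Notation M := (char_poly_mx A).
Local Notation V' := (map_mx polyC V).

Lemma char_poly_mx_mul_eigen c j : (M *m V') c j = (V c j)%:P * ('X - (a j)%:P).
Proof.
rewrite /char_poly_mx mulmxBl mul_scalar_mx -map_mxM AV mul_mx_diag !mxE.
by rewrite rmorphM /=; ring.
Qed.

Lemma adj_char_poly_mx_mul_eigen r j :
  (\adj M *m V') r j * ('X - (a j)%:P) = char_poly A * (V r j)%:P.
Proof.
have -> : (\adj M *m V') r j * ('X - (a j)%:P) = (\adj M *m (M *m V')) r j.
  rewrite [_ r j]mxE [RHS]mxE big_distrl /=; apply: eq_bigr => c _.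
  by rewrite char_poly_mx_mul_eigen mulrA !mxE.
by rewrite mulmxA mul_adj_mx mul_scalar_mx !mxE.
Qed.

Lemma root_char_poly_eigen r j : V r j != 0 -> root (char_poly A) (a j).
Proof.
move=> Vrj_neq0; have := congr1 (horner^~ (a j)) (adj_char_poly_mx_mul_eigen r j).
rewrite /= !hornerM hornerXsubC subrr mulr0 hornerC => /esym /eqP.
by rewrite mulf_eq0 (negbTE Vrj_neq0) orbF.
Qed.

Hypothesis a_inj : injective a.
Hypothesis V_col_neq0 : forall j, exists r, V r j != 0.

Lemma char_poly_eigen : char_poly A = \prod_j ('X - (a j)%:P).
Proof.
have size_enum : size (index_enum 'I_n) = n.
  by rewrite [index_enum _]unlock -enumT size_enum_ord.
have := @all_roots_prod_XsubC _ (char_poly A) [seq a j | j <- index_enum 'I_n].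
rewrite size_char_poly size_map size_enum => /(_ erefl).
rewrite (monicP (char_poly_monic A)) scale1r big_map; apply.
  by apply/allP => _ /mapP [j _ ->]; have [r] := V_col_neq0 j; apply: root_char_poly_eigen.
by rewrite uniq_rootsE map_inj_uniq ?index_enum_uniq.
Qed.

Lemma adj_char_poly_mx_mul_eigenE r j :
  (\adj M *m V') r j = (V r j)%:P * \prod_(i | i != j) ('X - (a i)%:P).
Proof.
apply: (@mulIf _ ('X - (a j)%:P)); first by rewrite polyXsubC_eq0.
by rewrite adj_char_poly_mx_mul_eigen char_poly_eigen (bigD1 j) //=; ring.
Qed.

End EigenvectorBasis.

Theorem mainTheorem10 (k N : nat) (hk : (2 <= k)%N) (hN : (2 <= N)%N) :
  char_poly (carryHt k N) =
  (k`!%:R : rat)^-1 *: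
    \sum_(j < k) (stirling1u k (k - j) *:
       \prod_(i < k | i != j) ('X - ((N ^ (k - i))%:R)%:P)).
Proof.
case: k hk => [//|n] hk; have N_gt0 : (0 < N)%N by lia.
have eigvals_inj : injective (fun j : 'I_n.+1 => (N ^ (n.+1 - j))%:R : rat).
  move=> i j /eqP; rewrite eqr_nat => /eqP /(expnI hN) eq_ij.
  by apply/val_inj => /=; have := ltn_ord i; have := ltn_ord j; lia.
have last_neq0 j : binom_coefmx rat n.+1 ord_max j != 0.
  rewrite binom_coefmx_last mulf_neq0 ?invr_eq0 ?pnatr_eq0 -?lt0n ?fact_gt0 //.
  by rewrite lt0r_neq0 // stirling1u_gt0 //; have := ltn_ord j; lia.
have row_sum c : \sum_j binom_coefmx rat n.+1 c j = (c == ord_max)%:R.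
  by rewrite binom_coefmx_row_sum -val_eqE.
rewrite carryHt_row'_col' char_poly_row'_col' -(sum_row_mulmx_polyC _ ord_max row_sum).
rewrite scaler_sumr; apply: eq_bigr => j _.
rewrite (adj_char_poly_mx_mul_eigenE (carryH_binom_coefmx n.+1 N_gt0) eigvals_inj); last first.
  by move=> i; exists ord_max.
by rewrite binom_coefmx_last polyCM -mulrA !mul_polyC scalerA.
Qed.
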